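(* Let $n\ge 2$ and consider Tower of Hanoi on three pegs with $n$ disks, starting from the initial position (all $n$ disks on Peg 1). For every intermediate position $P$ (i.e. a position in which the disks are not all on a single peg), there is a finite sequence of legal moves of even length, in which no two consecutive moves move the same disk, that transforms the initial position into $P$.
   Context: Tower of Hanoi on three pegs (labeled 1, 2, 3) with $n$ disks of pairwise distinct sizes: a position is an assignment of each disk to a peg, the disks on each peg being stacked with sizes decreasing from bottom to top. A legal move transfers the top disk of one peg to a different peg that is empty or whose top disk is larger. Here, sequences of legal moves are considered without any restriction on intermediate positions (in particular, intermediate positions may have all disks on one peg), except that no disk may be moved in two consecutive moves. *)

From mathcomp Require Import all_boot.
Set Implicit Arguments. Unset Strict Implicit. Unset Printing Implicit Defensive.

(* Disks are 'I_n, disk i having size i (so larger index = larger disk).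
   Pegs are 'I_3 : peg 1,2,3 of the paper are ordinals 0,1,2.
   A position assigns each disk to a peg; the stacking order on a peg is
   forced (decreasing sizes from bottom to top), so the assignment determines
   the position. *)
Definition position (n : nat) := {ffun 'I_n -> 'I_3}.

Definition initial (n : nat) : position n := [ffun => ord0].

Definition intermediate (n : nat) (P : position n) : Prop :=
  ~ (exists p : 'I_3, forall d : 'I_n, P d = p).

Definition move (n : nat) := ('I_n * 'I_3)%type.

(* The move (d,t) is legal in P: d is the top disk of its peg (no smaller disk
   on the same peg), t is a different peg, and t is empty or its top disk is
   larger than d (no smaller disk on t). *)
Definition legal_move (n : nat) (P : position n) (m : move n) : bool :=
  let: (d, t) := m in
  [&& t != P d,
      [forall e : 'I_n, (e < d) ==> (P e != P d)] &
      [forall e : 'I_n, (e < d) ==> (P e != t)]].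

Definition apply_move (n : nat) (P : position n) (m : move n) : position n :=
  [ffun e => if e == m.1 then m.2 else P e].

Fixpoint legal_seq (n : nat) (P : position n) (ms : seq (move n)) (Q : position n)
  : bool :=
  match ms with
  | [::] => P == Q
  | m :: ms' => legal_move P m && legal_seq (apply_move P m) ms' Q
  end.

Fixpoint no_repeat_disk (n : nat) (ms : seq (move n)) : bool :=
  match ms with
  | m1 :: ((m2 :: _) as ms') => (m1.1 != m2.1) && no_repeat_disk ms'
  | _ => true
  end.

(* Induct on the number of disks, viewing a position of n+1 disks as a position
   of the n smallest ones together with the peg of the largest.  Moving a whole
   tower of n+1 disks between two pegs takes an odd number of moves: move the
   n smaller disks away (odd), the largest disk (one move), and the n smaller
   disks back on top of it (odd).  Now start from a tower on peg a and aim at an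
   intermediate position P whose largest disk is on peg c.  If c = a, reach the
   restriction of P by induction (even).  Otherwise move the n smaller disks to
   the third peg (odd), the largest disk to c (one move), and finish with the
   restriction of P (even); when that restriction is itself a tower, at most
   two more rounds of the same kind are needed instead.  The smaller disks
   always move just before and after the largest one, so no disk moves twice
   in a row. *)
From mathcomp Require Import all_boot zify.
Set Implicit Arguments. Unset Strict Implicit. Unset Printing Implicit Defensive.

Lemma exists_third (a b : 'I_3) : exists2 t : 'I_3, t != a & t != b.
Proof.
have : 0 < #|~: [set a; b]|.
  by have := cardsC [set a; b]; rewrite cards2 card_ord; case: (a != b); lia.
by case/card_gt0P=> t; rewrite !inE negb_or => /andP[]; exists t.
Qed.

Lemma legal_seq_cat n (P Q R : position n) s1 s2 :
  legal_seq P s1 Q -> legal_seq Q s2 R -> legal_seq P (s1 ++ s2) R.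
Proof.
elim: s1 P => [|m s1 IH] P /=; first by move/eqP->.
by case/andP=> hm hs1 hs2; rewrite hm (IH _ hs1 hs2).
Qed.

Lemma no_repeat_disk_cat n (s1 s2 : seq (move n)) m :
  no_repeat_disk s1 -> no_repeat_disk (m :: s2) -> all (fun x => x.1 != m.1) s1 ->
  no_repeat_disk (s1 ++ m :: s2).
Proof.
elim: s1 => [|x [|y s1] IH] //= hs1 hs2; first by rewrite hs2 andbT.
case/andP: hs1 => -> hs1 /andP[_ hfresh] /=; exact: IH.
Qed.

Definition tower n (a : 'I_3) : position n := [ffun => a].

Section LargestDisk.

Variable n : nat.

(* The disk [lift ord_max j] of [n.+1] disks is the disk [j] of [n] disks, and
   [ord_max] is the largest disk. *)
Definition with_largest (Q : position n) (c : 'I_3) : position n.+1 :=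
  [ffun i => if unlift ord_max i is Some j then Q j else c].

Definition lift_move (m : move n) : move n.+1 := (lift ord_max m.1, m.2).

Definition starts_small (ms : seq (move n.+1)) : bool :=
  if ms is m :: _ then m.1 != ord_max else true.

Lemma with_largest_lift Q c j : with_largest Q c (lift ord_max j) = Q j.
Proof. by rewrite ffunE liftK. Qed.

Lemma with_largest_max Q c : with_largest Q c ord_max = c.
Proof. by rewrite ffunE unlift_none. Qed.

Lemma with_largest_restrict (P : position n.+1) :
  P = with_largest [ffun j => P (lift ord_max j)] (P ord_max).
Proof.
apply/ffunP => i; rewrite ffunE.
by case: unliftP => [j ->|->]; rewrite ?ffunE.
Qed.

Lemma tower_with_largest a : tower n.+1 a = with_largest (tower n a) a.
Proof. by apply/ffunP => i; rewrite !ffunE; case: unlift => *; rewrite ?ffunE. Qed.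

Lemma forall_lt_lift (d : 'I_n) (F : pred 'I_n.+1) :
  [forall e : 'I_n.+1, (e < lift ord_max d) ==> F e] =
  [forall e : 'I_n, (e < d) ==> F (lift ord_max e)].
Proof.
apply/forallP/forallP => h e; first by have := h (lift ord_max e); rewrite !lift_max.
case: (unliftP ord_max e) => [j ->|->]; first by have := h j; rewrite !lift_max.
by rewrite lift_max ltnNge ltnW.
Qed.

Lemma legal_move_lift Q c m :
  legal_move (with_largest Q c) (lift_move m) = legal_move Q m.
Proof.
case: m => d t; rewrite /legal_move /= !forall_lt_lift with_largest_lift.
by congr [&& _, _ & _]; apply: eq_forallb => e; rewrite with_largest_lift.
Qed.

Lemma apply_move_lift Q c m :
  apply_move (with_largest Q c) (lift_move m) = with_largest (apply_move Q m) c.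
Proof.
apply/ffunP => i; rewrite !ffunE.
case: unliftP => [j ->|->]; last by rewrite eq_sym lift_eqF.
by rewrite (inj_eq lift_inj) ffunE.
Qed.

Lemma legal_seq_lift Q R c ms :
  legal_seq Q ms R -> legal_seq (with_largest Q c) (map lift_move ms) (with_largest R c).
Proof.
elim: ms Q => [|m ms IH] Q; first by move=> /= /eqP ->.
case/andP=> hm hms; apply/andP; split; first by rewrite legal_move_lift.
by rewrite apply_move_lift; apply: IH.
Qed.

Lemma no_repeat_disk_lift ms : no_repeat_disk (map lift_move ms) = no_repeat_disk ms.
Proof.
elim: ms => [|m1 [|m2 ms] IH] //.
by move: IH => /= ->; rewrite (inj_eq lift_inj).
Qed.

Lemma starts_small_lift ms : starts_small (map lift_move ms).
Proof. by case: ms => //= m _; rewrite eq_sym neq_lift. Qed.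

Lemma legal_move_largest r b c :
  r != b -> c != b -> c != r -> legal_move (with_largest (tower n r) b) (ord_max, c).
Proof.
move=> hrb hcb hcr; rewrite /legal_move with_largest_max hcb /=.
apply/andP; split; apply/forallP => e; apply/implyP.
all: case: (unliftP ord_max e) => [j ->|->]; last by rewrite ltnn.
all: by rewrite with_largest_lift ffunE // eq_sym.
Qed.

Lemma apply_move_largest Q b c :
  apply_move (with_largest Q b) (ord_max, c) = with_largest Q c.
Proof.
apply/ffunP => i; rewrite !ffunE /=.
by case: unliftP => [j ->|->]; rewrite ?lift_eqF ?eqxx.
Qed.

End LargestDisk.

Definition reach n (P Q : position n) (parity : bool) : Prop :=
  exists ms : seq (move n),
    [/\ odd (size ms) = parity, no_repeat_disk ms & legal_seq P ms Q].

Definition reach_small n (P Q : position n.+1) (parity : bool) : Prop :=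
  exists ms : seq (move n.+1),
    [/\ odd (size ms) = parity, no_repeat_disk ms, starts_small ms & legal_seq P ms Q].

Lemma reach_small_reach n (P Q : position n.+1) parity :
  reach_small P Q parity -> reach P Q parity.
Proof. by case=> ms [? ? _ ?]; exists ms. Qed.

Lemma reach_small_refl n (P : position n.+1) : reach_small P P false.
Proof. by exists [::]; split => //=. Qed.

Lemma reach_small_lift n (Q R : position n) c parity :
  reach Q R parity -> reach_small (with_largest Q c) (with_largest R c) parity.
Proof.
case=> ms [hsize hrep hlegal]; exists (map (@lift_move n) ms).
by rewrite size_map no_repeat_disk_lift starts_small_lift legal_seq_lift.
Qed.

Definition tower_moves n := forall a r : 'I_3, a != r -> reach (tower n a) (tower n r) true.

(* The tower of smaller disks goes from [a] to [r], then the largest disk from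
   [b] to [c]; this costs an even number of moves. *)
Lemma reach_small_transfer n (a b r c : 'I_3) (Y : position n.+1) parity :
  tower_moves n -> r != a -> r != b -> c != b -> c != r ->
  reach_small (with_largest (tower n r) c) Y parity ->
  reach_small (with_largest (tower n a) b) Y parity.
Proof.
move=> htower hra hrb hcb hcr [s [hsize hrep hsmall hlegal]].
have har : a != r by rewrite eq_sym.
have [t [htsize htrep htlegal]] := htower a r har.
exists (map (@lift_move n) t ++ (ord_max, c) :: s); split.
- by rewrite size_cat size_map oddD htsize /= negbK.
- apply: no_repeat_disk_cat; first by rewrite no_repeat_disk_lift.
    by case: s {hsize hlegal} hrep hsmall => //= m s -> hm; rewrite eq_sym hm.
  by apply/allP => _ /mapP[m _ ->]; rewrite /= eq_sym neq_lift.
- by case: t htsize {htrep htlegal} => //= m t _; rewrite eq_sym neq_lift.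
- apply: legal_seq_cat (legal_seq_lift b htlegal) _.
  by apply/andP; rewrite legal_move_largest // apply_move_largest.
Qed.

Lemma reach_tower n : tower_moves n.+1.
Proof.
elim: n => [|n IH] a r har.
  exists [:: ((ord0 : 'I_1), r)]; split => //=; apply/andP; split.
    by rewrite ffunE eq_sym har; apply/and3P; split => //; apply/forallP.
  by apply/eqP/ffunP => i; rewrite !ffunE (ord1 i) eqxx.
have [t hta htr] := exists_third a r.
rewrite !(tower_with_largest n.+1).
have hra : r != a by rewrite eq_sym.
have hrt : r != t by rewrite eq_sym.
exact/reach_small_reach/(reach_small_transfer IH hta hta hra hrt)/reach_small_lift/IH.
Qed.

Lemma reach_small_split_tower n (a q c : 'I_3) :
  q != c -> reach_small (with_largest (tower n.+1 a) a) (with_largest (tower n.+1 q) c) false.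
Proof.
move=> hqc; have htower := @reach_tower n.
have hcq : c != q by rewrite eq_sym.
have [c' hc'q hc'c] := exists_third q c.
have hqc' : q != c' by rewrite eq_sym.
have hcc' : c != c' by rewrite eq_sym.
have hfinal : reach_small (with_largest (tower n.+1 c) c') (with_largest (tower n.+1 q) c) false.
  exact: reach_small_transfer htower hqc hqc' hcc' hcq (reach_small_refl _).
case: (eqVneq q a) => [<-|hqa].
  exact: (reach_small_transfer htower hcq hcq hc'q hc'c hfinal).
case: (eqVneq c a) => [<-|hca].
  apply: (reach_small_transfer htower hc'c hc'c hqc hqc').
  exact: reach_small_transfer htower hcc' hcq hc'q hc'c hfinal.
exact: (reach_small_transfer htower hqa hqa hca hcq (reach_small_refl _)).
Qed.

Lemma reach_intermediate n (a : 'I_3) (P : position n.+1) :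
  intermediate P -> reach (tower n.+1 a) P false.
Proof.
elim: n a P => [|n IH] a P hP.
  by case: hP; exists (P ord0) => d; rewrite (ord1 d).
rewrite (with_largest_restrict P) (tower_with_largest n.+1).
set Q := [ffun j => _]; set c := P ord_max.
apply: reach_small_reach.
case: (boolP [exists q, [forall d, Q d == q]]) => [/existsP[q /forallP hq]|hQ].
  have -> : Q = tower n.+1 q by apply/ffunP => d; rewrite [RHS]ffunE; exact/eqP/hq.
  apply: reach_small_split_tower; apply/eqP => hqc; apply: hP; exists c => d.
  case: (unliftP ord_max d) => [j ->|-> //]; rewrite -hqc.
  by have /eqP := hq j; rewrite ffunE.
have hQ' : intermediate Q.
  by case=> q hq; case/existsP: hQ; exists q; apply/forallP => d; rewrite hq.
case: (eqVneq c a) => [<-|hca]; first exact/reach_small_lift/IH.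
have [r hra hrc] := exists_third a c.
have hcr : c != r by rewrite eq_sym.
exact/(reach_small_transfer (@reach_tower n) hra hra hca hcr)/reach_small_lift/IH.
Qed.

Theorem corollary1 (n : nat) (hn : 2 <= n) (P : position n) :
  intermediate P ->
  exists ms : seq (move n),
    [/\ ~~ odd (size ms), no_repeat_disk ms & legal_seq (initial n) ms P].
Proof.
case: n hn P => [|n] // _ P /(reach_intermediate ord0) [ms [hsize hrep hlegal]].
by exists ms; rewrite hsize.
Qed.
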